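(* Let $m,n\ge 1$, $1\le r\le mn$, let $\mathcal{B}=\mathcal{B}(m,n;r)$ and let $G$ be the symmetry group acting on $\mathcal{B}$. Fix a division of the cells of the $m\times n$ grid into labelled regions such that every element of $G$ maps each region onto a region, and let board partitions be taken with respect to this division. Suppose a subset $\overline{\mathcal{B}}\subseteq\mathcal{B}$ satisfies: (1) $\overline{\mathcal{B}}$ is a disjoint union of sets $\pi_1,\dots,\pi_t$, where each $\pi_i$ is the set of all boards in $\mathcal{B}$ having some fixed board partition; (2) every board $B\in\mathcal{B}$ is equivalent under $G$ to some $B'\in\overline{\mathcal{B}}$; (3) if $B,B'\in\overline{\mathcal{B}}$ are equivalent under $G$, then they have the same board partition (and hence both lie in the same $\pi_i$). For each $1\le i\le t$ let $K_i=\{g\in G: g\cdot\pi_i=\pi_i\}$ be the subgroup of symmetries preserving the set $\pi_i$. Then \[|\mathcal{B}(m,n;r)|=\sum_{i=1}^t|\pi_i|\cdot[G:K_i].\]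
   Context: Consider a rectangular grid with $m$ rows and $n$ columns of unit square cells. For $1\le r\le mn$, $\mathcal{B}(m,n;r)$ is the set of all ways to choose exactly $r$ of the $mn$ cells to be ''blocked''; each such choice is called a board (so $|\mathcal{B}(m,n;r)|=\binom{mn}{r}$). Symmetries of the rectangle permute the cells and hence act on boards. The symmetry group $G$ is: the dihedral group $D_4$ of order 8 (rotations by $0,90,180,270$ degrees and reflections across the horizontal midline, vertical midline and both diagonals) if $m=n>1$; the group $\langle H,V\rangle=\{R_0,H,V,R_{180}\}$ (identity, reflections across the horizontal and vertical midlines, rotation by 180 degrees) if $m\ne n$ and $m,n>1$; and $\langle R_{180}\rangle$ if exactly one of $m,n$ equals 1. Two boards $B,B'$ are equivalent under $G$ if $g\cdot B=B'$ for some $g\in G$. Given a division of the grid into labelled disjoint regions, the board partition of a board is the ordered tuple giving the number of blocked cells of the board lying in each region. *)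

From mathcomp Require Import all_boot all_order all_fingroup.
Set Implicit Arguments. Unset Strict Implicit. Unset Printing Implicit Defensive.

(* Cells of the m x n grid: (row, column). *)
Notation cell m n := ('I_m * 'I_n)%type.

(* Turn a map into a permutation (identity if the map is not injective;
   all maps used below are injective in the cases where they are used). *)
Definition mkperm (T : finType) (f : T -> T) : {perm T} :=
  match @idP (injectiveb f) with
  | ReflectT H => perm (injectiveP _ H)
  | ReflectF _ => 1%g
  end.

Section Syms.
Variables m n : nat.
Definition symH : {perm cell m n} := mkperm (fun c : cell m n => (rev_ord c.1, c.2)).
Definition symV : {perm cell m n} := mkperm (fun c : cell m n => (c.1, rev_ord c.2)).
Definition symR180 : {perm cell m n} :=
  mkperm (fun c : cell m n => (rev_ord c.1, rev_ord c.2)).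
(* the following are meaningful only when m = n *)
Definition symD : {perm cell m n} :=
  mkperm (fun c : cell m n => (insubd c.1 (val c.2), insubd c.2 (val c.1))).
Definition symAD : {perm cell m n} :=
  mkperm (fun c : cell m n =>
    (insubd c.1 (n.-1 - val c.2), insubd c.2 (m.-1 - val c.1))).
Definition symR90 : {perm cell m n} :=
  mkperm (fun c : cell m n => (insubd c.1 (val c.2), insubd c.2 (m.-1 - val c.1))).
Definition symR270 : {perm cell m n} :=
  mkperm (fun c : cell m n => (insubd c.1 (n.-1 - val c.2), insubd c.2 (val c.1))).

Definition symG : {set {perm cell m n}} :=
  if m == n then
    [set 1%g; symR90; symR180; symR270; symH; symV; symD; symAD]
  else if (m == 1) || (n == 1) then [set 1%g; symR180]
  else [set 1%g; symH; symV; symR180].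
End Syms.

(* Action of a symmetry on a board (a set of blocked cells). *)
Definition act_board (T : finType) (g : {perm T}) (B : {set T}) : {set T} :=
  [set g x | x in B].

Definition boards (m n r : nat) : {set {set cell m n}} :=
  [set B : {set cell m n} | #|B| == r].

(* Board partition w.r.t. a labelled division reg : cell -> 'I_k
   (region a = reg^-1(a)): number of blocked cells in each region. *)
Definition board_partition (m n k : nat) (reg : cell m n -> 'I_k)
    (B : {set cell m n}) : {ffun 'I_k -> nat} :=
  [ffun a => #|B :&: reg @^-1: [set a]|].

Definition boards_with_partition (m n r k : nat) (reg : cell m n -> 'I_k)
    (p : {ffun 'I_k -> nat}) : {set {set cell m n}} :=
  [set B in boards m n r | board_partition reg B == p].

Definition stab_boards (m n : nat) (S : {set {set cell m n}}) :
    {set {perm cell m n}} :=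
  [set g in symG m n | [set act_board g B | B in S] == S].

From mathcomp Require Import all_boot all_order all_fingroup.
Set Implicit Arguments. Unset Strict Implicit. Unset Printing Implicit Defensive.

(* The translates g.pi_i (g in G, 1 <= i <= t) of the partition classes form an
   exact cover of B(m,n;r).  By (2) every board lies in some translate.  If a board
   lies in g.pi_i and in h.pi_j, then (3) gives pi_i and pi_j a common board, so
   i = j by disjointness; and because G permutes the regions, the board partition
   of g.B depends only on that of B, so gh^-1 maps pi_i onto itself and
   g.pi_i = h.pi_j.  Each translate has |pi_i| boards, and by orbit-stabiliser
   there are [G : K_i] distinct translates of pi_i.  That G is a group is checked
   by writing every symmetry as a composite of a transposition and row/column
   flips. *)

Lemma mkpermE (T : finType) (f : T -> T) : injective f -> mkperm f =1 f.
Proof.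
move=> f_inj x; rewrite /mkperm; case: {-}_ / idP => [f_injb|[]]; first by rewrite permE.
exact/injectiveP.
Qed.

Lemma mkperm_eq (T : finType) (f h : T -> T) : injective h -> f =1 h -> mkperm f =1 h.
Proof. by move=> h_inj fE x; rewrite mkpermE ?fE // => y z; rewrite !fE => /h_inj. Qed.

Lemma group_set_comp_closed (T : finType) (I : Type) (G : {set {perm T}}) (f : I -> T -> T) :
  1%g \in G -> (forall g, g \in G <-> exists i, g =1 f i) ->
  (forall i j, exists l, f j \o f i =1 f l) ->
  group_set G.
Proof.
move=> G1 memG f_comp; apply/group_setP; split=> // g h /memG[i gi] /memG[j hj].
have [l fl] := f_comp i j; apply/memG; exists l => x.
by rewrite permM gi hj -fl.
Qed.

Lemma eq_perm_of_eqfun (T : finType) (g h : {perm T}) (f : T -> T) : g =1 f -> h =1 f -> g = h.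
Proof. by move=> gf hf; apply/permP => x; rewrite gf hf. Qed.

Lemma card_exact_cover (T I : finType) (D : {set T}) (F : I -> {set {set T}}) :
  (forall i S, S \in F i -> S \subset D) ->
  (forall x, x \in D -> exists i, exists2 S, S \in F i & x \in S) ->
  (forall x i j S S', S \in F i -> S' \in F j -> x \in S -> x \in S' -> i = j /\ S = S') ->
  #|D| = \sum_i \sum_(S in F i) #|S|.
Proof.
move=> sub_D cover uniq_cover.
have count_covers x : x \in D -> \sum_i \sum_(S in F i) (x \in S : nat) = 1.
  case/cover=> i0 [S0 S0F xS0].
  have covers_eq i S : S \in F i -> x \in S -> (i == i0) && (S == S0).
    by move=> SF xS; have [-> ->] := uniq_cover x _ _ _ _ SF S0F xS xS0; rewrite !eqxx.
  rewrite (bigD1 i0) //= (bigD1 S0) //= xS0 !big1 // => [i i_neq | S /andP[SF S_neq]].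
    apply: big1 => S SF; apply/eqP; rewrite eqb0.
    by apply: contra i_neq => /(covers_eq _ _ SF)/andP[].
  by apply/eqP; rewrite eqb0; apply: contra S_neq => /(covers_eq _ _ SF)/andP[].
rewrite -sum1_card (eq_bigr (fun x => \sum_i \sum_(S in F i) (x \in S : nat))) => [|x xD].
  rewrite exchange_big /=; apply: eq_bigr => i _; rewrite exchange_big /=.
  apply: eq_big => // S /sub_D/subsetP SD.
  rewrite -sum1_card big_mkcond [RHS]big_mkcond; apply: eq_bigr => x _.
  by case: (boolP (x \in S)) => [/SD -> | _] //; case: (x \in D).
by rewrite count_covers.
Qed.

Section Flips.
Variables m n : nat.

Definition flip (a b : bool) (c : cell m n) : cell m n :=
  (if a then rev_ord c.1 else c.1, if b then rev_ord c.2 else c.2).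

Lemma flip_comp a b a' b' c : flip a' b' (flip a b c) = flip (a (+) a') (b (+) b') c.
Proof. by case: c => x y; case: a; case: b; case: a'; case: b'; rewrite /flip /= ?rev_ordK. Qed.

Lemma flip_inj a b : injective (flip a b).
Proof. by apply: (can_inj (g := flip a b)) => c; rewrite flip_comp !addbb; case: c. Qed.

Lemma perm1_flip : (1%g : {perm cell m n}) =1 flip false false.
Proof. by case=> x y; rewrite perm1. Qed.

Lemma symH_flip : symH m n =1 flip true false.
Proof. by apply: mkperm_eq (@flip_inj _ _) _; case. Qed.

Lemma symV_flip : symV m n =1 flip false true.
Proof. by apply: mkperm_eq (@flip_inj _ _) _; case. Qed.

Lemma symR180_flip : symR180 m n =1 flip true true.
Proof. by apply: mkperm_eq (@flip_inj _ _) _; case. Qed.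

End Flips.

Section Dihedral.
Variable m : nat.

Definition dihedral (s a b : bool) (c : cell m m) : cell m m :=
  flip a b (if s then (c.2, c.1) else c).

Lemma dihedral_comp s a b s' a' b' c :
  dihedral s' a' b' (dihedral s a b c) =
  dihedral (s (+) s') (if s' then b (+) a' else a (+) a')
                      (if s' then a (+) b' else b (+) b') c.
Proof.
by case: c => x y; case: s; case: a; case: b; case: s'; case: a'; case: b';
  rewrite /dihedral /flip /= ?rev_ordK.
Qed.

Lemma dihedral_inj s a b : injective (dihedral s a b).
Proof.
apply: (can_inj (g := dihedral s (if s then b else a) (if s then a else b))) => c.
by rewrite dihedral_comp; case: s; rewrite !addbb; case: c.
Qed.

Lemma insubd_rev_ord (i j : 'I_m) : insubd i (m.-1 - j) = rev_ord j.
Proof. by rewrite -subn1 -subnDA add1n -[m - _]/(val (rev_ord j)) valKd. Qed.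

Local Ltac by_dihedral := apply: mkperm_eq (@dihedral_inj _ _ _) _; case=> x y;
  by rewrite /dihedral /flip /= ?valKd ?insubd_rev_ord.

Lemma symR90_dihedral : symR90 m m =1 dihedral true false true. Proof. by_dihedral. Qed.
Lemma symR270_dihedral : symR270 m m =1 dihedral true true false. Proof. by_dihedral. Qed.
Lemma symD_dihedral : symD m m =1 dihedral true false false. Proof. by_dihedral. Qed.
Lemma symAD_dihedral : symAD m m =1 dihedral true true true. Proof. by_dihedral. Qed.

End Dihedral.

Lemma symG_square m g :
  g \in symG m m <-> exists i : bool * bool * bool, g =1 dihedral i.1.1 i.1.2 i.2.
Proof.
rewrite /symG eqxx !inE; split.
  case/orP=> [/orP[/orP[/orP[/orP[/orP[/orP[]|]|]|]|]|]|] /eqP->.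
  - by exists (false, false, false); apply: perm1_flip.
  - by exists (true, false, true); apply: symR90_dihedral.
  - by exists (false, true, true); apply: symR180_flip.
  - by exists (true, true, false); apply: symR270_dihedral.
  - by exists (false, true, false); apply: symH_flip.
  - by exists (false, false, true); apply: symV_flip.
  - by exists (true, false, false); apply: symD_dihedral.
  - by exists (true, true, true); apply: symAD_dihedral.
case=> -[[s a] b] /= gE; have eq_g := eq_perm_of_eqfun gE.
case: s a b gE eq_g => -[] [] gE eq_g.
- by rewrite (eq_g _ (@symAD_dihedral m)) eqxx !orbT.
- by rewrite (eq_g _ (@symR270_dihedral m)) eqxx !orbT.
- by rewrite (eq_g _ (@symR90_dihedral m)) eqxx !orbT.
- by rewrite (eq_g _ (@symD_dihedral m)) eqxx !orbT.
- by rewrite (eq_g _ (@symR180_flip m m)) eqxx !orbT.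
- by rewrite (eq_g _ (@symH_flip m m)) eqxx !orbT.
- by rewrite (eq_g _ (@symV_flip m m)) eqxx !orbT.
- by rewrite (eq_g _ (@perm1_flip m m)) eqxx.
Qed.

Lemma mem_rotations m n g :
  g \in [set 1%g; symR180 m n] <-> exists b : bool, g =1 flip b b.
Proof.
rewrite !inE; split.
  case/orP=> /eqP->; [exists false; exact: perm1_flip | exists true; exact: symR180_flip].
case=> -[] gE; have eq_g := eq_perm_of_eqfun gE.
- by rewrite (eq_g _ (@symR180_flip m n)) eqxx orbT.
- by rewrite (eq_g _ (@perm1_flip m n)) eqxx.
Qed.

Lemma mem_flips m n g :
  g \in [set 1%g; symH m n; symV m n; symR180 m n] <->
  exists i : bool * bool, g =1 flip i.1 i.2.
Proof.
rewrite !inE; split.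
  case/orP=> [/orP[/orP[]|]|] /eqP->.
  - by exists (false, false); apply: perm1_flip.
  - by exists (true, false); apply: symH_flip.
  - by exists (false, true); apply: symV_flip.
  - by exists (true, true); apply: symR180_flip.
case=> -[a b] /= gE; have eq_g := eq_perm_of_eqfun gE.
case: a b gE eq_g => -[] gE eq_g.
- by rewrite (eq_g _ (@symR180_flip m n)) eqxx !orbT.
- by rewrite (eq_g _ (@symH_flip m n)) eqxx !orbT.
- by rewrite (eq_g _ (@symV_flip m n)) eqxx !orbT.
- by rewrite (eq_g _ (@perm1_flip m n)) eqxx.
Qed.

Lemma symG_group_set m n : group_set (symG m n).
Proof.
have [<-|m_neq_n] := eqVneq m n.
  apply: (group_set_comp_closed _ (@symG_square m)); first by rewrite /symG eqxx !inE eqxx.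
  move=> [[s a] b] [[s' a'] b'].
  exists (s (+) s', if s' then b (+) a' else a (+) a', if s' then a (+) b' else b (+) b').
  by move=> c /=; rewrite dihedral_comp.
rewrite /symG (negbTE m_neq_n); case: ifP => _.
  apply: (group_set_comp_closed _ (@mem_rotations m n)); first by rewrite !inE eqxx.
  by move=> b b'; exists (b (+) b') => c /=; rewrite flip_comp.
apply: (group_set_comp_closed _ (@mem_flips m n)); first by rewrite !inE eqxx.
by move=> [a b] [a' b']; exists (a (+) a', b (+) b') => c /=; rewrite flip_comp.
Qed.

Canonical symG_group m n := Group (symG_group_set m n).

Lemma act_boardE (T : finType) (g : {perm T}) (B : {set T}) :
  act_board g B = ('P^*)%act B g.
Proof. by []. Qed.

Lemma act_boardI (T : finType) (g : {perm T}) (X Y : {set T}) :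
  act_board g (X :&: Y) = act_board g X :&: act_board g Y.
Proof. by apply: imsetI => x y _ _; apply: perm_inj. Qed.

Lemma card_act (T : finType) (g : {perm T}) (B : {set T}) : #|act_board g B| = #|B|.
Proof. by rewrite act_boardE card_setact. Qed.

Lemma stab_boardsE m n (S : {set {set cell m n}}) :
  stab_boards S = ('C_(symG m n)[S | 'P^*^*])%g.
Proof. by apply/setP => g; rewrite !inE sub1set inE. Qed.

Lemma card_orbit_boards m n (S : {set {set cell m n}}) :
  #|orbit 'P^*^* (symG m n) S| = #|symG m n : stab_boards S|%g.
Proof. by rewrite stab_boardsE -(card_orbit _ (symG_group m n)). Qed.

Section RegionPreservingSymmetries.
Variables (m n k : nat) (reg : cell m n -> 'I_k).
Hypothesis symG_regions : forall g, g \in symG m n -> forall a : 'I_k, exists b : 'I_k,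
  act_board g (reg @^-1: [set a]) = reg @^-1: [set b].

Lemma board_partition_act g B B' : g \in symG m n ->
  board_partition reg B = board_partition reg B' ->
  board_partition reg (act_board g B) = board_partition reg (act_board g B').
Proof.
move=> gG eq_part; apply/ffunP => b; rewrite !ffunE.
have [a regaE] := symG_regions (groupVr gG) b.
have {regaE} -> : reg @^-1: [set b] = act_board g (reg @^-1: [set a]).
  by rewrite -regaE !act_boardE actKV.
rewrite -!act_boardI !act_boardE !card_setact.
by move/ffunP/(_ a): eq_part; rewrite !ffunE.
Qed.

Lemma boards_with_partition_stable r q g B : g \in symG m n ->
    B \in boards_with_partition r reg q ->
    act_board g B \in boards_with_partition r reg q ->
  'P^*^*%act (boards_with_partition r reg q) g = boards_with_partition r reg q.
Proof.
move=> gG Bq gBq; apply/eqP; rewrite eqEcard card_setact leqnn andbT.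
apply/subsetP => _ /imsetP[B' B'q ->].
move: B'q Bq gBq; rewrite !inE -act_boardE card_act.
move=> /andP[-> /eqP B'q] /andP[_ /eqP Bq] /andP[_ /eqP gBq] /=.
by rewrite -gBq (board_partition_act gG (B := B') (B' := B)) ?B'q ?Bq.
Qed.

End RegionPreservingSymmetries.

Section TranslatesOfPartitionClasses.
Variables (m n r k t : nat) (reg : cell m n -> 'I_k).
Variables (p : 'I_t -> {ffun 'I_k -> nat}) (Bbar : {set {set cell m n}}).
Local Notation pi i := (boards_with_partition r reg (p i)).
Local Notation translates i := (orbit 'P^*^* (symG m n) (pi i)).

Hypothesis symG_regions : forall g, g \in symG m n -> forall a : 'I_k, exists b : 'I_k,
  act_board g (reg @^-1: [set a]) = reg @^-1: [set b].
Hypothesis Bbar_def : Bbar = \bigcup_(i < t) pi i.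
Hypothesis pi_disjoint : forall i j : 'I_t, i != j -> [disjoint pi i & pi j].
Hypothesis Bbar_meets_orbits : forall B, B \in boards m n r ->
  exists2 g, g \in symG m n & act_board g B \in Bbar.
Hypothesis Bbar_equiv_partition : forall B B', B \in Bbar -> B' \in Bbar ->
  (exists2 g, g \in symG m n & act_board g B = B') ->
  board_partition reg B = board_partition reg B'.

Lemma translates_sub_boards i S : S \in translates i -> S \subset boards m n r.
Proof.
case/imsetP=> g _ ->; apply/subsetP => _ /imsetP[B Bpi ->].
by move: Bpi; rewrite !inE -act_boardE card_act => /andP[].
Qed.

Lemma translates_cover B : B \in boards m n r ->
  exists i, exists2 S, S \in translates i & B \in S.
Proof.
case/Bbar_meets_orbits=> g gG; rewrite Bbar_def => /bigcupP[i _ gBpi].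
exists i; exists ('P^*^*%act (pi i) g^-1)%g; first exact: mem_orbit (groupVr gG).
by rewrite -[B](actK 'P^* g); apply: mem_setact.
Qed.

Lemma translates_unique B i j S S' : S \in translates i -> S' \in translates j ->
  B \in S -> B \in S' -> i = j /\ S = S'.
Proof.
case/imsetP=> g gG -> /imsetP[h hG ->] /imsetP[B1 B1pi ->] /imsetP[B2 B2pi] B1B2.
have hgG : (g * h^-1)%g \in symG m n by rewrite groupM ?groupV.
have gB1 : act_board (g * h^-1) B1 = B2 by rewrite act_boardE actM B1B2 actK.
have in_Bbar l C : C \in pi l -> C \in Bbar.
  by rewrite Bbar_def => Cpi; apply/bigcupP; exists l.
have part_eq : board_partition reg B1 = board_partition reg B2.
  by apply: Bbar_equiv_partition (in_Bbar _ _ B1pi) (in_Bbar _ _ B2pi) _; exists (g * h^-1)%g.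
move: (B1pi) (B2pi); rewrite !inE => /andP[B1r _] /andP[_ /eqP B2p].
have B1pij : B1 \in pi j by rewrite !inE B1r part_eq B2p eqxx.
have ij : i = j by apply: contraTeq B1pij => /pi_disjoint/disjointFr/(_ B1pi)->.
subst j; split=> //.
have stable := boards_with_partition_stable symG_regions hgG B1pi.
by rewrite -[in RHS](stable _) ?gB1 // -actM mulgKV.
Qed.

End TranslatesOfPartitionClasses.

Theorem theorem3p1 (m n r k t : nat)
  (reg : cell m n -> 'I_k)
  (p : 'I_t -> {ffun 'I_k -> nat})
  (Bbar : {set {set cell m n}}) :
  0 < m -> 0 < n -> 0 < r -> r <= m * n ->
  (* every element of G maps each region onto a region *)
  (forall g, g \in symG m n -> forall a : 'I_k, exists b : 'I_k,
     act_board g (reg @^-1: [set a]) = reg @^-1: [set b]) ->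
  (* (1) Bbar is the disjoint union of pi_1, ..., pi_t *)
  Bbar = \bigcup_(i < t) boards_with_partition r reg (p i) ->
  (forall i j : 'I_t, i != j ->
     [disjoint boards_with_partition r reg (p i) & boards_with_partition r reg (p j)]) ->
  (* (2) every board is equivalent to one in Bbar *)
  (forall B, B \in boards m n r ->
     exists2 g, g \in symG m n & act_board g B \in Bbar) ->
  (* (3) equivalent boards of Bbar have the same board partition *)
  (forall B B', B \in Bbar -> B' \in Bbar ->
     (exists2 g, g \in symG m n & act_board g B = B') ->
     board_partition reg B = board_partition reg B') ->
  #|boards m n r| =
    \sum_(i < t) #|boards_with_partition r reg (p i)| *
                 #|symG m n : stab_boards (boards_with_partition r reg (p i))|%g.
Proof.
move=> _ _ _ _ regions Bbar_def disj meets equiv.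
rewrite (card_exact_cover (translates_sub_boards (reg := reg) (p := p))
  (translates_cover Bbar_def meets) (translates_unique regions Bbar_def disj equiv)).
apply: eq_bigr => i _; rewrite -card_orbit_boards mulnC -sum_nat_const.
by apply: eq_bigr => _ /imsetP[g _ ->]; rewrite card_setact.
Qed.
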